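(* Let $N\ge 1$, let $a_1,\dots,a_N>0$, $T_1,\dots,T_N\ge 0$ and $P_{\mathrm{tot}}>0$. For $P_i\ge 0$ let $r_i(P_i)=\log_2(1+a_iP_i)$ and $J(\mathbf P)=\sum_{i=1}^N (r_i(P_i)-T_i)^2$ for $\mathbf P=(P_1,\dots,P_N)$. Consider the problem of minimizing $J(\mathbf P)$ subject to $\sum_{i=1}^N P_i\le P_{\mathrm{tot}}$ and $P_i\ge 0$ for all $i$. If $\mathbf P^*=(P_1^*,\dots,P_N^* )$ is an optimal solution of this problem, then $r_i(P_i^* )\le T_i$ for all $i=1,\dots,N$. *)

(* concrete reals. Indices i = 0..N-1 (paper's 1..N). *)
From Stdlib Require Import Reals.
Open Scope R_scope.

Definition log2 (x : R) : R := ln x / ln 2.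

Definition rate (a : nat -> R) (P : nat -> R) (i : nat) : R := log2 (1 + a i * P i).

Fixpoint sumN (N : nat) (f : nat -> R) : R :=
  match N with O => 0 | S n => sumN n f + f n end.

Definition J (N : nat) (a T P : nat -> R) : R :=
  sumN N (fun i => (rate a P i - T i) ^ 2).

Definition feasible (N : nat) (Ptot : R) (P : nat -> R) : Prop :=
  (forall i, (i < N)%nat -> 0 <= P i) /\ sumN N P <= Ptot.

Definition optimal (N : nat) (a T : nat -> R) (Ptot : R) (P : nat -> R) : Prop :=
  feasible N Ptot P /\ forall Q, feasible N Ptot Q -> J N a T P <= J N a T Q.

(** If some rate overshoots its target, [r_i(P_i) > T_i], lower that user's
    power to [(2^T_i - 1) / a_i], the level at which its rate is exactly [T_i].
    The total power decreases, so the allocation stays feasible, and the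
    [i]-th term of [J] drops from a positive value to [0] while the others are
    unchanged, contradicting optimality. *)

From Stdlib Require Import Reals Lra Lia.
Open Scope R_scope.

Lemma ln2_pos : 0 < ln 2.
Proof. rewrite <- ln_1. apply ln_increasing; lra. Qed.

Lemma log2_Rpower2 (t : R) : log2 (Rpower 2 t) = t.
Proof.
  unfold log2. rewrite ln_Rpower. field.
  apply Rgt_not_eq, ln2_pos.
Qed.

Lemma log2_lt_inv (x y : R) : 0 < x -> 0 < y -> log2 x < log2 y -> x < y.
Proof.
  intros Hx Hy Hlt. apply ln_lt_inv; [exact Hx | exact Hy |].
  unfold log2, Rdiv in Hlt.
  apply Rmult_lt_reg_r with (/ ln 2); [apply Rinv_0_lt_compat, ln2_pos | exact Hlt].
Qed.

Definition target_power (a t : R) : R := (Rpower 2 t - 1) / a.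

Lemma target_power_ge0 (a t : R) : 0 < a -> 0 <= t -> 0 <= target_power a t.
Proof.
  intros Ha Ht. unfold target_power.
  assert (H1 : 1 <= Rpower 2 t).
  { rewrite <- (Rpower_O 2) by lra. apply Rle_Rpower; lra. }
  apply Rmult_le_pos; [lra | left; apply Rinv_0_lt_compat, Ha].
Qed.

Lemma target_power_spec (a t : R) : 0 < a -> 1 + a * target_power a t = Rpower 2 t.
Proof. intros Ha. unfold target_power. field. lra. Qed.

Lemma log2_target_power (a t : R) : 0 < a -> log2 (1 + a * target_power a t) = t.
Proof. intros Ha. rewrite target_power_spec by exact Ha. apply log2_Rpower2. Qed.

Lemma target_power_lt (a t p : R) :
  0 < a -> 0 <= p -> t < log2 (1 + a * p) -> target_power a t < p.
Proof.
  intros Ha Hp Hlt.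
  rewrite <- (log2_Rpower2 t), <- (target_power_spec a t Ha) in Hlt.
  apply log2_lt_inv in Hlt; [| rewrite target_power_spec by exact Ha; apply exp_pos | nra].
  apply Rmult_lt_reg_l with a; lra.
Qed.

Lemma sumN_ext (N : nat) (f g : nat -> R) :
  (forall j, (j < N)%nat -> f j = g j) -> sumN N f = sumN N g.
Proof.
  induction N as [|n IH]; intros Hfg; simpl; [reflexivity |].
  rewrite IH by (intros j Hj; apply Hfg; lia).
  rewrite Hfg by lia. reflexivity.
Qed.

Lemma sumN_change_one (N : nat) (f g : nat -> R) (i : nat) :
  (i < N)%nat -> (forall j, j <> i -> g j = f j) ->
  sumN N g = sumN N f + (g i - f i).
Proof.
  induction N as [|n IH]; intros Hi Hfg; simpl; [lia |].
  destruct (Nat.eq_dec i n) as [-> | Hin].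
  - rewrite (sumN_ext n g f) by (intros j Hj; apply Hfg; lia). lra.
  - rewrite (IH ltac:(lia) Hfg), (Hfg n) by lia. lra.
Qed.

Definition update (P : nat -> R) (i : nat) (x : R) : nat -> R :=
  fun j => if Nat.eq_dec j i then x else P j.

Lemma update_eq (P : nat -> R) (i : nat) (x : R) : update P i x i = x.
Proof. unfold update. destruct (Nat.eq_dec i i); [reflexivity | contradiction]. Qed.

Lemma update_neq (P : nat -> R) (i j : nat) (x : R) : j <> i -> update P i x j = P j.
Proof. intros Hji. unfold update. destruct (Nat.eq_dec j i); [contradiction | reflexivity]. Qed.

Lemma feasible_update_le (N : nat) (Ptot : R) (P : nat -> R) (i : nat) (x : R) :
  (i < N)%nat -> 0 <= x <= P i -> feasible N Ptot P -> feasible N Ptot (update P i x).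
Proof.
  intros Hi Hx [Hpos Hsum]. split.
  - intros j Hj. destruct (Nat.eq_dec j i) as [-> | Hji].
    + rewrite update_eq. lra.
    + rewrite update_neq by exact Hji. auto.
  - rewrite (sumN_change_one N P (update P i x) i Hi) by (intros j; apply update_neq).
    rewrite update_eq. lra.
Qed.

Lemma J_update (N : nat) (a T P : nat -> R) (i : nat) (x : R) :
  (i < N)%nat ->
  J N a T (update P i x)
  = J N a T P + ((log2 (1 + a i * x) - T i) ^ 2 - (rate a P i - T i) ^ 2).
Proof.
  intros Hi. unfold J.
  rewrite (sumN_change_one N (fun j => (rate a P j - T j) ^ 2)
             (fun j => (rate a (update P i x) j - T j) ^ 2) i Hi).
  - cbv beta. unfold rate. rewrite update_eq. reflexivity.
  - intros j Hji. unfold rate. rewrite update_neq by exact Hji. reflexivity.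
Qed.

Theorem theorem1 (N : nat) (a T : nat -> R) (Ptot : R) (Pstar : nat -> R) :
  (1 <= N)%nat ->
  (forall i, (i < N)%nat -> 0 < a i) ->
  (forall i, (i < N)%nat -> 0 <= T i) ->
  0 < Ptot ->
  optimal N a T Ptot Pstar ->
  forall i, (i < N)%nat -> rate a Pstar i <= T i.
Proof.
  intros _ Ha HT _ [Hfeas Hopt] i Hi.
  destruct (Rle_or_lt (rate a Pstar i) (T i)) as [Hle | Hover]; [exact Hle | exfalso].
  set (q := target_power (a i) (T i)).
  assert (Hq : 0 <= q <= Pstar i).
  { split; [apply target_power_ge0; auto |].
    left. apply target_power_lt; [auto | apply (proj1 Hfeas i Hi) | exact Hover]. }
  specialize (Hopt (update Pstar i q) (feasible_update_le N Ptot Pstar i q Hi Hq Hfeas)).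
  rewrite (J_update N a T Pstar i q Hi) in Hopt.
  unfold q in Hopt. rewrite log2_target_power in Hopt by auto.
  assert (0 < (rate a Pstar i - T i) ^ 2) by (apply pow_lt; lra).
  replace ((T i - T i) ^ 2) with 0 in Hopt by ring.
  lra.
Qed.
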